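(* Let $k=\mathbb R$ or $\mathbb C$, let $(V,g)$ be an inner product vector space over $k$, let $f\in\operatorname{End}_k(V)$, and let $\mathcal H_f=\{H_i\}_{i\in I}$ be a family of finite-dimensional $f$-invariant subspaces with $V=\bigoplus_{i\in I}H_i$; write $f_i=f|_{H_i}$ and $\widetilde{\mathcal H}_f^\perp=\bigoplus_{i\in I}[\operatorname{Ker} f_i]_i^\perp$. Then $\widetilde{\mathcal H}_f^\perp=[\operatorname{Ker} f]^\perp$ if and only if $[\operatorname{Ker} f_i]_i^\perp\subseteq\big[\sum_{j\ne i}\operatorname{Ker} f_j\big]^\perp$ for every $i\in I$.
   Context: An inner product is linear in the first argument, conjugate-symmetric and positive definite. $V=\bigoplus_{i\in I}H_i$ means the natural map $\bigoplus H_i\to V$ is an isomorphism. For a subspace $W\subseteq V$, $W^\perp=\{v\in V:g(w,v)=0\ \forall w\in W\}$; for a subspace $W\subseteq H_i$, $[W]_i^\perp=\{v\in H_i:g(w,v)=0\ \forall w\in W\}$. *)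

From HB Require Import structures.
From mathcomp Require Import all_boot all_order all_algebra.
From mathcomp Require Import complex.
From mathcomp Require Import reals.
Set Implicit Arguments. Unset Strict Implicit. Unset Printing Implicit Defensive.
Import Order.TTheory GRing.Theory Num.Theory.
Local Open Scope ring_scope.

(* Subspaces of a (possibly infinite-dimensional) K-vector space V are
   represented as predicates V -> Prop. *)

Section Defs.
Variables (K : numDomainType) (conj : K -> K) (V : lmodType K).

Definition is_inner_product (g : V -> V -> K) : Prop :=
  [/\ (forall (a : K) (u v w : V), g (a *: u + v) w = a * g u w + g v w),
      (forall u v : V, g u v = conj (g v u)) &
      (forall v : V, v != 0 -> 0 < g v v)].

Definition is_subspace (W : V -> Prop) : Prop :=
  W 0 /\ forall (a : K) (u v : V), W u -> W v -> W (a *: u + v).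

Definition finite_dim (W : V -> Prop) : Prop :=
  exists s : seq V, (forall x, x \in s -> W x) /\
    forall v, W v <-> exists c : 'I_(size s) -> K, v = \sum_(k < size s) c k *: s`_k.

Definition invariant (f : V -> V) (W : V -> Prop) : Prop :=
  forall v, W v -> W (f v).

Variable I : eqType.

Definition sum_sub (P : I -> Prop) (S : I -> V -> Prop) : V -> Prop :=
  fun v => exists (r : seq I) (w : I -> V),
    [/\ uniq r, (forall i, i \in r -> P i /\ S i (w i)) & v = \sum_(i <- r) w i].

(* V = (+)_{i in I} H_i : the natural map (+) H_i -> V is an isomorphism,
   i.e. every vector is a finite sum of elements of the H_i (surjectivity),
   and a finite sum of elements of distinct H_i vanishes only if every
   summand vanishes (injectivity). *)
Definition is_direct_sum_decomp (H : I -> V -> Prop) : Prop :=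
  (forall v : V, sum_sub (fun _ => True) H v) /\
  (forall (r : seq I) (w : I -> V), uniq r -> (forall i, i \in r -> H i (w i)) ->
      \sum_(i <- r) w i = 0 -> forall i, i \in r -> w i = 0).

Variable g : V -> V -> K.

Definition perp (W : V -> Prop) : V -> Prop :=
  fun v => forall w, W w -> g w v = 0.

Definition perp_in (Hi : V -> Prop) (W : V -> Prop) : V -> Prop :=
  fun v => Hi v /\ forall w, W w -> g w v = 0.

Definition ker_in (f : V -> V) (Hi : V -> Prop) : V -> Prop :=
  fun v => Hi v /\ f v = 0.

Definition ker (f : V -> V) : V -> Prop := fun v => f v = 0.

End Defs.

Definition lemma3p19_over (K : numDomainType) (conj : K -> K) : Prop :=
  forall (V : lmodType K) (g : V -> V -> K) (f : {linear V -> V})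
         (I : eqType) (H : I -> V -> Prop),
    is_inner_product conj g ->
    (forall i, is_subspace (H i)) ->
    (forall i, finite_dim (H i)) ->
    (forall i, invariant f (H i)) ->
    is_direct_sum_decomp H ->
    (forall v, sum_sub (fun _ => True)
                 (fun i => perp_in g (H i) (ker_in f (H i))) v
               <-> perp g (ker f) v)
    <->
    (forall i v, perp_in g (H i) (ker_in f (H i)) v ->
       perp g (sum_sub (fun j => j <> i) (fun j => ker_in f (H j))) v).

From Pilot Require Import Defs.
From mathcomp Require Import all_boot all_order all_algebra.
From mathcomp Require Import complex.
From mathcomp Require Import reals.
From mathcomp Require Import boolp.
Set Implicit Arguments. Unset Strict Implicit. Unset Printing Implicit Defensive.
Import Order.TTheory GRing.Theory Num.Theory.
Local Open Scope ring_scope.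

(* Since f preserves every H_i and the sum is direct, Ker f is the direct sum
   of the Ker f_i.  Hence a sum of vectors p_i in [Ker f_i]_i^perp is
   orthogonal to Ker f exactly when each p_i is also orthogonal to the Ker f_j
   with j <> i, which gives the inclusion of the first space in the second and
   the "only if" part.  Conversely, write v in [Ker f]^perp as a sum of
   components v_i in H_i and split each v_i = k_i + p_i orthogonally with
   respect to the finite-dimensional space Ker f_i.  Then k = sum k_i lies in
   Ker f and also in [Ker f]^perp, being v - sum p_i; so g(k, k) = 0, k = 0
   and v = sum p_i. *)

Section Subspace.
Variables (K : numDomainType) (V : lmodType K) (W : V -> Prop).
Hypothesis W_sub : is_subspace W.

Lemma subspace0 : W 0.
Proof. by case: W_sub. Qed.

Lemma subspaceD u v : W u -> W v -> W (u + v).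
Proof. by case: W_sub => _ WL Wu Wv; rewrite -[u]scale1r; apply: WL. Qed.

Lemma subspaceZ a v : W v -> W (a *: v).
Proof. by case: W_sub => W0 WL Wv; rewrite -[_ *: v]addr0; apply: WL. Qed.

Lemma subspaceB u v : W u -> W v -> W (u - v).
Proof.
by move=> Wu Wv; rewrite -scaleN1r; apply: subspaceD => //; apply: subspaceZ.
Qed.

Lemma subspace_sum (I : eqType) (r : seq I) (F : I -> V) :
  (forall i, i \in r -> W (F i)) -> W (\sum_(i <- r) F i).
Proof.
move=> WF; rewrite big_seq; elim/big_ind: _ => [|u v|i]; first exact: subspace0.
  exact: subspaceD.
exact: WF.
Qed.

End Subspace.

Lemma subspaceI (K : numDomainType) (V : lmodType K) (W W' : V -> Prop) :
  is_subspace W -> is_subspace W' -> is_subspace (fun v => W v /\ W' v).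
Proof.
move=> W_sub W'_sub; split.
  by split; [exact: subspace0 W_sub | exact: subspace0 W'_sub].
move=> a u v [Wu W'u] [Wv W'v].
by split; [exact: (subspaceD W_sub (subspaceZ W_sub a Wu) Wv)
          | exact: (subspaceD W'_sub (subspaceZ W'_sub a W'u) W'v)].
Qed.

Lemma ker_subspace (K : numDomainType) (V : lmodType K) (f : {linear V -> V}) :
  is_subspace (ker f).
Proof.
split=> [|a u v fu fv]; first exact: raddf0.
by rewrite /ker linearP fu fv scaler0 addr0.
Qed.

Section Span.
Variables (K : numDomainType) (V : lmodType K).

Fixpoint spanned_by (t : seq V) (v : V) : Prop :=
  if t is x :: t' then exists c, spanned_by t' (v - c *: x) else v = 0.

Lemma spanned_by_subspace t : is_subspace (spanned_by t).
Proof.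
elim: t => [|x t [span0 spanL]] /=.
  by split=> // a u v -> ->; rewrite scaler0 addr0.
split; first by exists 0; rewrite scale0r subr0.
move=> a u v [cu hu] [cv hv]; exists (a * cu + cv).
have -> : a *: u + v - (a * cu + cv) *: x = a *: (u - cu *: x) + (v - cv *: x).
  by rewrite scalerBr scalerDl scalerA opprD !addrA [_ - _ + v]addrAC.
exact: spanL.
Qed.

Lemma spanned_by_mem t x : x \in t -> spanned_by t x.
Proof.
elim: t => [|y t IH] //=; rewrite inE => /orP[/eqP -> | xt].
  by exists 1; rewrite scale1r subrr; apply: subspace0 (spanned_by_subspace t).
by exists 0; rewrite scale0r subr0; apply: IH.
Qed.

Lemma spanned_by_comb s (c : 'I_(size s) -> K) :
  spanned_by s (\sum_(k < size s) c k *: s`_k).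
Proof.
apply: (subspace_sum (I := 'I_(size s)) (spanned_by_subspace s)) => k _.
apply: subspaceZ; first exact: spanned_by_subspace.
by apply: spanned_by_mem; exact: mem_nth.
Qed.

Lemma finite_dim_spanned (H : V -> Prop) :
  finite_dim H -> exists s, forall v, H v -> spanned_by s v.
Proof. by case=> s [_ Hs]; exists s => v /Hs [c ->]; apply: spanned_by_comb. Qed.

Lemma spanned_by_sub (W : V -> Prop) t v :
  is_subspace W -> (forall x, x \in t -> W x) -> spanned_by t v -> W v.
Proof.
move=> W_sub; elim: t v => [|x t IH] v tW /=; first by move=> ->; exact: subspace0.
case=> c /IH tv; rewrite -(subrK (c *: x) v).
apply: subspaceD => //; first by apply: tv => y yt; apply: tW; rewrite inE yt orbT.
by apply: subspaceZ => //; apply: tW; rewrite inE eqxx.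
Qed.

End Span.

Lemma subspace_spanned_within (K : numFieldType) (V : lmodType K) s
    (W : V -> Prop) :
  is_subspace W -> (forall v, W v -> spanned_by s v) ->
  exists t, (forall x, x \in t -> W x) /\ (forall v, W v -> spanned_by t v).
Proof.
elim: s W => [|x s IH] W W_sub Ws; first by exists [::]; split=> // v /Ws.
pose W' v := W v /\ spanned_by s v.
have W'_sub := subspaceI W_sub (spanned_by_subspace s).
have [t [tW' W't]] := IH W' W'_sub (fun v W'v => W'v.2).
(* A vector w0 of W outside span s has a nonzero x-coordinate, so subtracting
   a multiple of w0 brings any vector of W into W' *)
have [[w0 [Ww0 nsw0]] | Wspan] := pselect (exists w0, W w0 /\ ~ spanned_by s w0).
  exists (w0 :: t); split=> [y|v Wv /=].
    by rewrite inE => /orP[/eqP -> // | yt]; exact: (tW' y yt).1.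
  have [c hc] := Ws v Wv; have [b hb] := Ws w0 Ww0.
  have bN0 : b != 0.
    by apply: contra_notN nsw0 => /eqP b0; rewrite b0 scale0r subr0 in hb.
  exists (c / b); apply: W't; split; first by apply: subspaceB => //; exact: subspaceZ.
  have -> : v - c / b *: w0 = (v - c *: x) - c / b *: (w0 - b *: x).
    by rewrite scalerBr scalerA divfK // opprB addrA subrK.
  have s_sub := spanned_by_subspace s.
  exact: (subspaceB s_sub hc (subspaceZ s_sub _ hb)).
exists t; split=> [y yt | v Wv]; first exact: (tW' y yt).1.
by apply: W't; split=> //; apply: (contra_notP _ Wspan) => nsv; exists v.
Qed.

Section InnerProduct.
Variables (K : numFieldType) (conj : K -> K) (V : lmodType K) (g : V -> V -> K).
Hypothesis g_ip : is_inner_product conj g.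

Lemma ipDl u v w : g (u + v) w = g u w + g v w.
Proof. by case: g_ip => gL _ _; rewrite -[u]scale1r gL mul1r scale1r. Qed.

Lemma ip0l w : g 0 w = 0.
Proof. by apply: (@addrI _ (g 0 w)); rewrite -ipDl !addr0. Qed.

Lemma ipZl a u w : g (a *: u) w = a * g u w.
Proof. by case: g_ip => gL _ _; rewrite -[_ *: u]addr0 gL ip0l addr0. Qed.

Lemma ipBl u v w : g (u - v) w = g u w - g v w.
Proof. by rewrite ipDl -scaleN1r ipZl mulN1r. Qed.

Lemma ip_suml (I : Type) (r : seq I) (F : I -> V) w :
  g (\sum_(i <- r) F i) w = \sum_(i <- r) g (F i) w.
Proof. exact: (big_morph (g^~ w) (fun u v => ipDl u v w) (ip0l w)). Qed.

(* The conjugation is arbitrary, so g need not be additive in its second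
   argument; only orthogonality transfers from one side to the other. *)
Lemma ip_orthC u v : g u v = 0 -> g v u = 0.
Proof.
case: g_ip => _ gC _ uv0.
have conj0 : conj 0 = 0 by rewrite -(ip0l 0) -gC.
by rewrite gC uv0 conj0.
Qed.

Lemma ip_eq0 v : g v v = 0 -> v = 0.
Proof.
case: g_ip => _ _ gP vv0; apply/eqP; apply: contraT => /gP.
by rewrite vv0 ltxx.
Qed.

Lemma perp_subspace (W : V -> Prop) : is_subspace (perp g W).
Proof.
split=> [w _ | a u v Pu Pv w Ww]; first exact/ip_orthC/ip0l.
apply: ip_orthC; rewrite ipDl ipZl.
by rewrite (ip_orthC (Pu w Ww)) (ip_orthC (Pv w Ww)) mulr0 addr0.
Qed.

Lemma perp_sum_sub (I : eqType) (P : I -> Prop) (S : I -> V -> Prop) v :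
  perp g (sum_sub P S) v <-> forall i, P i -> perp g (S i) v.
Proof.
split=> [Pv i Pi w Sw | PSv _ [r [w [_ rPS ->]]]].
  apply: Pv; exists [:: i], (fun=> w).
  by rewrite big_seq1; split=> // j /[!inE] /eqP ->.
rewrite ip_suml big_seq big1 // => i /rPS [Pi Swi]; exact: PSv i Pi _ Swi.
Qed.

Lemma ip_line_residual u x : exists a, g (u - a *: x) x = 0.
Proof.
have [-> | xN0] := eqVneq x 0; first by exists 0; apply/ip_orthC/ip0l.
have gxxN0 : g x x != 0 by case: g_ip => _ _ /(_ x xN0); rewrite lt0r => /andP[].
by exists (g u x / g x x); rewrite ipBl ipZl divfK // subrr.
Qed.

Lemma perp_spanned_cons t x r :
  perp g (spanned_by t) r -> g x r = 0 -> perp g (spanned_by (x :: t)) r.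
Proof.
move=> tr xr w [c tw]; rewrite -(subrK (c *: x) w) ipDl ipZl xr mulr0 addr0.
exact: tr.
Qed.

(* Gram-Schmidt step: correct the projection onto span t by a multiple of the
   part of x orthogonal to span t. *)
Lemma orth_proj_spanned t v :
  exists k, spanned_by t k /\ perp g (spanned_by t) (v - k).
Proof.
elim: t v => [|x t IH] v.
  by exists 0; split=> // w /= ->; apply: ip0l.
have [kx [tkx x'perp]] := IH x; have [kv [tkv uperp]] := IH v.
have [a ra] := ip_line_residual (v - kv) (x - kx).
have rperp : perp g (spanned_by t) (v - kv - a *: (x - kx)).
  exact: (subspaceB (perp_subspace _) uperp (subspaceZ (perp_subspace _) _ x'perp)).
exists (kv + a *: (x - kx)); split.
  exists a; have -> : kv + a *: (x - kx) - a *: x = kv - a *: kx.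
    by rewrite scalerBr addrA addrAC addrK.
  have t_sub := spanned_by_subspace t.
  exact: (subspaceB t_sub tkv (subspaceZ t_sub _ tkx)).
rewrite opprD addrA; apply: perp_spanned_cons => //.
by rewrite -{1}(subrK kx x) ipDl (ip_orthC ra) (rperp _ tkx) addr0.
Qed.

Lemma orth_proj_finite_dim (W H : V -> Prop) v :
  is_subspace W -> finite_dim H -> (forall w, W w -> H w) ->
  exists k, W k /\ perp g W (v - k).
Proof.
move=> W_sub /finite_dim_spanned [s Hs] WH.
have [t [tW Wt]] := subspace_spanned_within W_sub (fun w Ww => Hs w (WH w Ww)).
have [k [tk kperp]] := orth_proj_spanned t v.
by exists k; split=> [|w /Wt]; [exact: spanned_by_sub tk | exact: kperp].
Qed.

End InnerProduct.

Section Kernels.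
Variables (K : numDomainType) (V : lmodType K) (f : {linear V -> V}).
Variables (I : eqType) (H : I -> V -> Prop).

Local Notation kers := (fun i => ker_in f (H i)).

Lemma sum_kers_ker (P : I -> Prop) w : sum_sub P kers w -> ker f w.
Proof.
case=> r [w' [_ rK ->]]; rewrite /ker raddf_sum big_seq big1 // => i.
by case/rK=> _ [].
Qed.

Lemma ker_sum_kers w :
  (forall i, Defs.invariant f (H i)) -> is_direct_sum_decomp H ->
  ker f w -> sum_sub (fun=> True) kers w.
Proof.
move=> H_inv [Hsurj Hinj] fw0; have [r [w' [ur rH wE]]] := Hsurj w.
exists r, w'; split=> // i ir; split=> //; split; first exact: (rH i ir).2.
apply: (Hinj r (fun i => f (w' i))) => // [j jr|]; first exact/H_inv/(rH j jr).2.
by rewrite -raddf_sum -wE.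
Qed.

End Kernels.

Section DirectSum.
Variables (K : numFieldType) (conj : K -> K) (V : lmodType K) (g : V -> V -> K).
Variables (f : {linear V -> V}) (I : eqType) (H : I -> V -> Prop).
Hypothesis g_ip : is_inner_product conj g.
Hypothesis H_sub : forall i, is_subspace (H i).
Hypothesis H_fin : forall i, finite_dim (H i).
Hypothesis H_inv : forall i, Defs.invariant f (H i).
Hypothesis H_dec : is_direct_sum_decomp H.

Local Notation kers := (fun i => ker_in f (H i)).
Local Notation perp_kers := (fun i => perp_in g (H i) (ker_in f (H i))).

Hypothesis perp_kers_orth : forall i v, perp_kers i v ->
  perp g (sum_sub (fun j => j <> i) kers) v.

Lemma sum_perp_kers_perp v : sum_sub (fun=> True) perp_kers v -> perp g (ker f) v.
Proof.
case=> r [p [_ rP ->]]; apply: (subspace_sum (perp_subspace g_ip _)) => i /rP [_ pi].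
move=> w /(ker_sum_kers H_inv H_dec); apply: (perp_sum_sub g_ip _ _ _).2 => j _.
have [-> | ji] := eqVneq j i; first exact: pi.2.
by move: (perp_kers_orth pi) => /(perp_sum_sub g_ip); apply; exact/eqP.
Qed.

Lemma perp_ker_sum_perp_kers v : perp g (ker f) v -> sum_sub (fun=> True) perp_kers v.
Proof.
move=> vperp; case: H_dec => Hsurj _; have [r [v' [ur rH vE]]] := Hsurj v.
have orth_split i : exists k, kers i k /\ perp g (kers i) (v' i - k).
  have kers_sub := subspaceI (H_sub i) (ker_subspace f).
  by apply: (orth_proj_finite_dim g_ip (v' i) kers_sub (H_fin i)) => w [].
have [k kP] := choice orth_split.
have pdec : sum_sub (fun=> True) perp_kers (\sum_(i <- r) (v' i - k i)).
  exists r, (fun i => v' i - k i); split=> // i ir.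
  split=> //; split; last exact: (kP i).2.
  exact: (subspaceB (H_sub i) (rH i ir).2 (kP i).1.1).
suff k0 : \sum_(i <- r) k i = 0 by move: pdec; rewrite sumrB -vE k0 subr0.
have kker : ker f (\sum_(i <- r) k i).
  by rewrite /ker raddf_sum big1 // => i _; exact: (kP i).1.2.
have kperp : perp g (ker f) (\sum_(i <- r) k i).
  rewrite -[X in perp _ _ X](subKr (\sum_(i <- r) v' i)) -sumrB -vE.
  exact: (subspaceB (perp_subspace g_ip _) vperp (sum_perp_kers_perp pdec)).
exact: ip_eq0 g_ip _ (kperp _ kker).
Qed.

End DirectSum.

Lemma perp_kers_orth_of_eq (K : numDomainType) (conj : K -> K) (V : lmodType K)
    (g : V -> V -> K) (f : {linear V -> V}) (I : eqType) (H : I -> V -> Prop) :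
  (forall v, sum_sub (fun _ => True) (fun i => perp_in g (H i) (ker_in f (H i))) v
             <-> perp g (ker f) v) ->
  forall i v, perp_in g (H i) (ker_in f (H i)) v ->
    perp g (sum_sub (fun j => j <> i) (fun j => ker_in f (H j))) v.
Proof.
move=> E i v Pv w /sum_kers_ker; apply: (E v).1.
by exists [:: i], (fun=> v); rewrite big_seq1; split=> // j /[!inE] /eqP ->.
Qed.

Lemma lemma3p19_over_numField (K : numFieldType) (conj : K -> K) :
  lemma3p19_over conj.
Proof.
move=> V g f I H g_ip H_sub H_fin H_inv H_dec; split; first exact: perp_kers_orth_of_eq.
move=> C v; split; first exact: (sum_perp_kers_perp g_ip H_inv H_dec C).
exact: (perp_ker_sum_perp_kers g_ip H_sub H_fin H_inv H_dec C).
Qed.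

Theorem lemma3p19 :
  (forall R : realType, lemma3p19_over (fun x : R => x)) /\
  (forall R : realType, lemma3p19_over (fun z : R[i] => Num.conj z)).
Proof. by split=> R; exact: lemma3p19_over_numField. Qed.
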